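(* Assume the setting described in the context and fix a compact interval $I\subset(0,\infty)$. Suppose Assumptions (A1) and (A2) hold. Then for every $x\in F$, \[\lim_{n\rightarrow\infty}\sup_{t\in I}\left|\beta(n)q^n_{\lfloor\gamma(n)t\rfloor}(g_n(x))-q_t(x)\right|=0.\]
   Context: Let $(E,d_E)$ be a metric space and $F\subseteq E$ such that $F\cap\overline{B}_E(x,r)$ is compact for all $x\in E$, $r>0$ ($\overline{B}_E$, $B_E$ closed and open balls in $E$). Let $d_F:=d_E|_{F\times F}$, $B_F(x,r)$ the open ball in $(F,d_F)$, $\rho\in F$, $\nu$ a Radon measure of full support on $(F,d_F)$ (extended to $E$ by $\nu(A):=\nu(A\cap F)$), and $(q_t(x))_{x\in F,t>0}$ jointly continuous in $(t,x)$ with $q_t\ge0$, $\int_Fq_t\,d\nu=1$ for each $t>0$. For a locally finite connected graph $G$ with at least two vertices and distinguished vertex $\rho(G)$: $d_G$ is the shortest-path metric, $B_G(x,r)$ the open $d_G$-ball; $\mu^G$ a symmetric weight with $\mu^G_{xy}>0$ iff $\{x,y\}\in E(G)$; $\mu^G_x:=\sum_y\mu^G_{xy}$; $\nu^G(A):=\sum_{x\in A}\mu^G_x$; $X^G$ the discrete time simple random walk with $P_G(x,y)=\mu^G_{xy}/\mu^G_x$ and law $\mathbf{P}^G_x$; $p^G_m(x,y):=\mathbf{P}^G_x(X^G_m=y)/\nu^G(\{y\})$, $q^G_m(x,y):=\frac12(p^G_m(x,y)+p^G_{m+1}(x,y))$, $q^G_m(x):=q^G_m(\rho(G),x)$. $(G^n)_{n\ge1}$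 are such graphs with $V(G^n)\subseteq E$, $\rho(G^n)=\rho$; write $\nu^n,X^n,q^n$ for $\nu^{G^n},X^{G^n},q^{G^n}$. $(\alpha(n)),(\beta(n)),(\gamma(n))$ are non-negative sequences diverging to $\infty$. For $x\in E$, $g_n(x)$ is a point of $V(G^n)$ minimising $d_E(x,\cdot)$ over $V(G^n)$. Assumption (A1): (a) there is $c_1>0$ with $d_{G^n}(x,y)\ge c_1\alpha(n)d_E(x,y)$ for all $x,y\in V(G^n)$, $n\ge1$; and a non-negative $\tilde\alpha(n)=o(\alpha(n))$ such that for each $r>0$ there exist $c_2<\infty$, $n_0$ with $d_{G^n}(x,y)\le c_2\alpha(n)d_E(x,y)+\tilde\alpha(n)$ for all $x,y\in V(G^n)\cap B_E(\rho,r)$, $n\ge n_0$. (b) For each $r>0$, $\lim_n\sup_{x\in B_F(\rho,r)}d_E(x,V(G^n))=0$. (c) For every $x\in F$, $r>0$, $\lim_n\beta(n)^{-1}\nu^n(B_E(x,r))=\nu(B_E(x,r))$. (d) For every compact interval $I\subset(0,\infty)$, $x\in F$, $r>0$, $\lim_n\mathbf{P}^{G^n}_\rho(X^n_{\lfloor\gamma(n)t\rfloor}\in B_E(x,r))=\int_{B_F(x,r)}q_t(y)\nu(dy)$ uniformly for $t\in I$. Assumption (A2): for every compact interval $I\subset(0,\infty)$ and $r>0$, \[\lim_{\delta\to0}\limsup_{n\to\infty}\sup_{\substack{x,y\in B_{G^n}(\rho,\alpha(n)r):\\ d_{G^n}(x,y)\le\alpha(n)\delta}}\sup_{t\in I}\beta(n)\left|q^n_{\lfloor\gamma(n)t\rfloor}(x)-q^n_{\lfloor\gamma(n)t\rfloor}(y)\right|=0.\]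 *)

From HB Require Import structures.
From mathcomp Require Import all_boot all_order all_algebra.
From mathcomp Require Import all_classical all_reals all_analysis.
Set Implicit Arguments. Unset Strict Implicit. Unset Printing Implicit Defensive.
Import Order.TTheory GRing.Theory Num.Theory.
Import numFieldNormedType.Exports.
Local Open Scope classical_set_scope.
Local Open Scope ring_scope.

Section Defs.
Context {R : realType} {E : choiceType}.

Definition is_metric (d : E -> E -> R) : Prop :=
  (forall x y, 0 <= d x y) /\ (forall x y, d x y = 0 <-> x = y) /\
  (forall x y, d x y = d y x) /\ (forall x y z, d x z <= d x y + d y z).

Definition dball (d : E -> E -> R) (x : E) (r : R) : set E := [set y | d x y < r].
Definition dcball (d : E -> E -> R) (x : E) (r : R) : set E := [set y | d x y <= r].

Definition dopen (d : E -> E -> R) (U : set E) : Prop :=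
  forall x, U x -> exists2 r : R, 0 < r & dball d x r `<=` U.

Definition dcompact (d : E -> E -> R) (K : set E) : Prop :=
  forall C : set (set E), (forall U, C U -> dopen d U) ->
    K `<=` \bigcup_(U in C) U ->
    exists2 C' : set (set E), finite_set C' /\ C' `<=` C & K `<=` \bigcup_(U in C') U.

Definition dist_set (d : E -> E -> R) (x : E) (A : set E) : R := inf [set d x v | v in A].

Fixpoint kpath (adj : E -> E -> Prop) (k : nat) (x y : E) : Prop :=
  match k with
  | 0%N => x = y
  | k'.+1 => exists z, adj x z /\ kpath adj k' z y
  end.

Definition is_lf_connected_graph (V : set E) (adj : E -> E -> Prop) : Prop :=
  (forall x y, adj x y -> V x /\ V y) /\
  (forall x y, adj x y -> adj y x) /\
  (forall x, ~ adj x x) /\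
  (forall x, V x -> finite_set [set y | adj x y]) /\
  (forall x y, V x -> V y -> exists k, kpath adj k x y) /\
  (exists x y, V x /\ V y /\ x <> y).

Definition gdist (adj : E -> E -> Prop) (x y : E) : R :=
  inf [set (k%:R : R) | k in [set k : nat | kpath adj k x y]].

Definition gball (V : set E) (adj : E -> E -> Prop) (x : E) (r : R) : set E :=
  [set y | V y /\ gdist adj x y < r].

(** weights: mu x y is the conductance (extended by 0 off the edges) *)
Definition wdeg (mu : E -> E -> R) (x : E) : R := fine (\esum_(y in [set: E]) (mu x y)%:E).

Definition gmeasure (V : set E) (mu : E -> E -> R) (A : set E) : \bar R :=
  \esum_(x in A `&` V) (wdeg mu x)%:E.

(** m-step transition probabilities P_x(X_m = y) of the discrete time
    random walk with P(x,z) = mu x z / mu_x *)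
Fixpoint wprob (mu : E -> E -> R) (m : nat) (x y : E) : \bar R :=
  match m with
  | 0%N => if `[< x = y >] then 1%E else 0%E
  | m'.+1 => \esum_(z in [set: E]) ((mu x z / wdeg mu x)%:E * wprob mu m' z y)%E
  end.

Definition wprob_set (V : set E) (mu : E -> E -> R) (m : nat) (x : E) (A : set E) : \bar R :=
  \esum_(y in A `&` V) wprob mu m x y.

Definition pkernel (mu : E -> E -> R) (m : nat) (x y : E) : R :=
  fine (wprob mu m x y) / wdeg mu y.

Definition qkernel (mu : E -> E -> R) (m : nat) (x y : E) : R :=
  (pkernel mu m x y + pkernel mu m.+1 x y) / 2.

End Defs.

Definition nfloor {R : realType} (x : R) : nat := Num.truncn x.

(* Fix x in F and a small ball B around x.  By (A1)(a) and (A2), for large n the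
   rescaled kernel beta(n) q^n_m is almost constant on the vertices of B, equal to
   its value at g_n(x).  Summing q^n_m against the vertex weights over B gives the
   average of P(X_m in B) and P(X_(m+1) in B) (with m = floor(gamma(n) t)), which
   (A1)(d) and the continuity of q bring within eps nu(B) of q_t(x) nu(B); by (A1)(c)
   the same sum is close to beta(n) q^n_m(g_n(x)) nu(B).  Dividing by nu(B) > 0
   gives the claim, uniformly in t in I thanks to the compactness of I.
   Only the upper bound of (A1)(a) is needed. *)

From HB Require Import structures.
From mathcomp Require Import all_boot all_order all_algebra.
From mathcomp Require Import all_classical all_reals all_analysis.
From mathcomp Require Import lra ring.
Import Order.TTheory GRing.Theory Num.Theory.
Import numFieldNormedType.Exports.
Local Open Scope classical_set_scope.
Local Open Scope ring_scope.

Section sum_and_integral_estimates.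
Context {R : realType}.

Lemma esumZl (T : choiceType) (I : set T) (c : R) (f : T -> R) : 0 <= c ->
  \esum_(i in I) (c * f i)%:E = (c%:E * \esum_(i in I) (f i)%:E)%E.
Proof.
move=> c0; rewrite /esum -ereal_supZl //; last first.
  by apply/set0P; exists (\sum_(x \in set0) (f x)%:E)%E; exists set0 => //; exact: fsets_set0.
rewrite image_comp; congr ereal_sup; apply: eq_imagel => A [finA _] /=.
by rewrite !fsumEFin // -EFinM mulr_fsumr.
Qed.

Lemma norm_sub_mul_le (x c e N : R) : 0 <= N -> 0 <= e ->
  Num.max (c - e) 0 * N <= x -> x <= (c + e) * N -> `|x - c * N| <= e * N.
Proof.
move=> N0 e0 lex xle; have : (c - e) * N <= x.
  by apply: le_trans lex; apply: ler_wpM2r => //; rewrite le_max lexx.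
by rewrite ler_norml; move=> ?; apply/andP; split; nra.
Qed.

Lemma esum_near_cst (T : choiceType) (I : set T) (f w : T -> R) (c e G : R) :
  \esum_(i in I) (w i)%:E = G%:E -> 0 <= c -> 0 <= e ->
  (forall y, I y -> 0 <= w y) -> (forall y, I y -> 0 <= f y) ->
  (forall y, I y -> `|f y - c| <= e) ->
  exists2 S, \esum_(i in I) (f i * w i)%:E = S%:E & `|S - c * G| <= e * G.
Proof.
move=> wG c0 e0 w0 f0 fc.
have G0 : 0 <= G by rewrite -lee_fin -wG; apply: esum_ge0 => y /w0; rewrite lee_fin.
have le_up : (\esum_(i in I) (f i * w i)%:E <= ((c + e) * G)%:E)%E.
  rewrite EFinM -wG -esumZl ?addr_ge0 //; apply: le_esum => y Iy.
  rewrite lee_fin ler_wpM2r ?w0 //.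
  by have := fc y Iy; rewrite ler_distl => /andP[].
have le_lo : ((Num.max (c - e) 0 * G)%:E <= \esum_(i in I) (f i * w i)%:E)%E.
  rewrite EFinM -wG -esumZl ?le_max ?lexx ?orbT //; apply: le_esum => y Iy.
  rewrite lee_fin ler_wpM2r ?w0 // ge_max f0 // andbT.
  by have := fc y Iy; rewrite ler_distl => /andP[].
have S0 : (0 <= \esum_(i in I) (f i * w i)%:E)%E.
  by apply: esum_ge0 => y Iy; rewrite lee_fin mulr_ge0 ?f0 ?w0.
have Sfin : \esum_(i in I) (f i * w i)%:E \is a fin_num.
  by rewrite ge0_fin_numE // (le_lt_trans le_up) // ltry.
exists (fine (\esum_(i in I) (f i * w i)%:E)); first by rewrite fineK.
by apply: norm_sub_mul_le => //; rewrite -lee_fin fineK.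
Qed.

Context {d : measure_display} {T : measurableType d} (mu : {measure set T -> \bar R}).

(* No measurability is needed: the integral of a nonnegative function is a
   supremum over the simple functions below it. *)
Lemma ge0_le_integral_nomeas (D : set T) (f1 f2 : T -> \bar R) :
  (forall x, D x -> (0 <= f1 x)%E) -> (forall x, D x -> (f1 x <= f2 x)%E) ->
  (\int[mu]_(x in D) f1 x <= \int[mu]_(x in D) f2 x)%E.
Proof.
move=> f10 f12.
have f20 x : D x -> (0 <= f2 x)%E by move=> Dx; exact: le_trans (f10 _ Dx) (f12 _ Dx).
rewrite (ge0_integralE mu f10) (ge0_integralE mu f20).
apply: le_ereal_sup => z [h hle <-]; exists h => // x.
apply: le_trans (hle x) _; rewrite /patch; case: ifP => // /[!inE] Dx.
exact: f12.
Qed.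

Lemma integral_near_cst (D : set T) (f : T -> R) (c e N : R) :
  measurable D -> mu D = N%:E -> 0 <= c -> 0 <= e ->
  (forall y, D y -> 0 <= f y) -> (forall y, D y -> `|f y - c| <= e) ->
  `|fine (\int[mu]_(y in D) (f y)%:E)%E - c * N| <= e * N.
Proof.
move=> mD muD c0 e0 f0 fc.
have le_up : (\int[mu]_(y in D) (f y)%:E <= ((c + e) * N)%:E)%E.
  rewrite EFinM -muD -integral_cst //; apply: ge0_le_integral_nomeas => y Dy.
    by rewrite lee_fin f0.
  by have := fc y Dy; rewrite lee_fin ler_distl => /andP[].
have le_lo : ((Num.max (c - e) 0 * N)%:E <= \int[mu]_(y in D) (f y)%:E)%E.
  rewrite EFinM -muD -integral_cst //; apply: ge0_le_integral_nomeas => y Dy.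
    by rewrite lee_fin le_max lexx orbT.
  rewrite lee_fin ge_max f0 // andbT.
  by have := fc y Dy; rewrite ler_distl => /andP[].
have I0 : (0 <= \int[mu]_(y in D) (f y)%:E)%E.
  by apply: integral_ge0 => y Dy; rewrite lee_fin f0.
have Ifin : (\int[mu]_(y in D) (f y)%:E)%E \is a fin_num.
  by rewrite ge0_fin_numE // (le_lt_trans le_up) // ltry.
apply: norm_sub_mul_le; rewrite -?lee_fin ?fineK //.
by rewrite -muD measure_ge0.
Qed.

End sum_and_integral_estimates.

Section metric_balls.
Context {R : realType} {d : measure_display} {E : measurableType d}
  {dE : E -> E -> R} (dE_metric : is_metric dE).

Lemma dopen_dball x r : dopen dE (dball dE x r).
Proof.
have [_ [_ [_ dtri]]] := dE_metric.
rewrite /dball => y /= xy; exists (r - dE x y); first by rewrite subr_gt0.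
by rewrite /dball => z /= yz; have := dtri x y z; lra.
Qed.

Lemma dcompact_dopenC K : dcompact dE K -> dopen dE (~` K).
Proof.
have [d0 [deq [dsym dtri]]] := dE_metric.
move=> cK z nKz.
pose U k := [set y | (k.+1%:R : R)^-1 < dE y z].
have U_mono k k' : (k <= k')%N -> U k `<=` U k'.
  by move=> kk' y /=; apply: le_lt_trans; rewrite lef_pV2 ?posrE // ler_nat ltnS.
have U_open k : dopen dE (U k).
  rewrite /U => y /= Uy; exists (dE y z - k.+1%:R^-1); first by rewrite subr_gt0.
  by rewrite /dball => w /= yw; have := dtri y w z; move: (k.+1%:R^-1) Uy yw => i; lra.
have K_cover : K `<=` \bigcup_(V in range U) V.
  move=> y Ky; have yz : 0 < dE y z.
    by rewrite lt0r d0 andbT; apply/eqP => /deq yz; apply: nKz; rewrite -yz.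
  exists (U (Num.truncn (dE y z)^-1)); first by exists (Num.truncn (dE y z)^-1).
  by rewrite /U /= -[X in _ < X]invrK ltf_pV2 ?posrE ?invr_gt0 // truncnS_gt.
have rangeU_open V : range U V -> dopen dE V by move=> [k _ <-].
have [C' [finC' C'U] KC'] := cK (range U) rangeU_open K_cover.
have [B C'B] := finite_fsetP.1 finC'.
have [k0 C'k0] : exists k0, forall V, V \in finmap.enum_fset B -> V `<=` U k0.
  have : forall V, V \in finmap.enum_fset B -> range U V.
    by move=> V BV; apply: C'U; rewrite C'B.
  elim: (finmap.enum_fset B) => [|V s IH] sU; first by exists 0%N.
  have [k1 _ Vk1] := sU V (mem_head _ _).
  have [k2 sk2] := IH (fun W sW => sU W (@mem_behead _ (V :: s) W sW)).
  exists (maxn k1 k2) => W; rewrite in_cons => /orP[/eqP ->|/sk2 Wk2].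
    by rewrite -Vk1; apply: U_mono; exact: leq_maxl.
  by apply: subset_trans Wk2 _; apply: U_mono; exact: leq_maxr.
exists (k0.+1%:R^-1); first by rewrite invr_gt0.
rewrite /dball => w /= zw Kw; have [V C'V Vw] := KC' w Kw.
have : U k0 w by apply: C'k0 Vw; move: C'V; rewrite C'B.
by rewrite /U /= dsym; move: (k0.+1%:R^-1) zw => i; lra.
Qed.

Hypothesis dE_borel : @measurable d E = <<s [set U | dopen dE U] >>.

Lemma dopen_measurable U : dopen dE U -> measurable U.
Proof. by move=> oU; rewrite dE_borel; exact: sub_sigma_algebra. Qed.

Lemma measurable_dball x r : measurable (dball dE x r).
Proof. exact/dopen_measurable/dopen_dball. Qed.

Lemma measurable_setI_dball {F : set E} :
  (forall x r, 0 < r -> dcompact dE (F `&` dcball dE x r)) ->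
  forall x r, 0 < r -> measurable (F `&` dball dE x r).
Proof.
move=> Fcpt x r r0.
have -> : F `&` dball dE x r = (F `&` dcball dE x r) `&` dball dE x r.
  apply/seteqP; split => y /=; last by move=> [[]].
  by move=> [Fy xy]; do 2?split => //; exact: ltW.
apply: measurableI; last exact: measurable_dball.
rewrite -[X in measurable X]setCK; apply: measurableC.
exact/dopen_measurable/dcompact_dopenC/Fcpt.
Qed.

End metric_balls.

Section random_walk.
Context {R : realType} {E : choiceType} {mu : E -> E -> R}
  (mu_ge0 : forall x y, 0 <= mu x y).

Lemma wdeg_ge0 x : 0 <= wdeg mu x.
Proof. by apply: fine_ge0; apply: esum_ge0 => y _; rewrite lee_fin. Qed.

Lemma wdeg_gt0 {V : set E} {adj : E -> E -> Prop} :
  is_lf_connected_graph V adj -> (forall x y, 0 < mu x y <-> adj x y) ->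
  forall x, V x -> 0 < wdeg mu x.
Proof.
move=> [_ [_ [_ [adj_fin [conn [u [v [Vu [Vv uv]]]]]]]]] mu_adj x Vx.
have [w [Vw wx]] : exists w, V w /\ w <> x.
  have [->|xu] := eqVneq x u; first by exists v; split => // /esym.
  by exists u; split => // ux; rewrite ux eqxx in xu.
have [z xz] : exists z, adj x z.
  have [[|k] /= wpath] := conn x w Vx Vw; first by rewrite wpath in wx.
  by have [z [xz _]] := wpath; exists z.
set A := [set y | adj x y]; have finA : finite_set A := adj_fin x Vx.
have -> : wdeg mu x = \sum_(y \in A) mu x y.
  rewrite /wdeg -[RHS]/(fine ((\sum_(y \in A) mu x y)%:E)) -fsumEFin //.
  rewrite -esum_fset //; last by move=> y _; rewrite lee_fin.
  congr fine; rewrite [in RHS]esum_mkcond; apply: eq_esum => y _.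
  case: ifPn => // /negP xy; apply/eqP; rewrite eqe eq_le mu_ge0 andbT leNgt.
  by apply/negP => /mu_adj ?; apply: xy; rewrite inE.
rewrite (fsbigD1 z) ?inE //; apply: lt_le_trans (proj2 (mu_adj x z) xz) _.
by rewrite lerDl fsumr_ge0.
Qed.

Lemma esum_transition_le1 x : (\esum_(z in [set: E]) (mu x z / wdeg mu x)%:E <= 1)%E.
Proof.
have [->|w_neq0] := eqVneq (wdeg mu x) 0.
  by rewrite esum1 // => z _; rewrite invr0 mulr0.
have Sfin : \esum_(z in [set: E]) (mu x z)%:E \is a fin_num.
  have S0 : (0 <= \esum_(z in [set: E]) (mu x z)%:E)%E.
    by apply: esum_ge0 => y _; rewrite lee_fin.
  by move: w_neq0; rewrite /wdeg; case: (\esum_(z in _) _) S0 => //=; rewrite eqxx.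
under eq_esum do rewrite mulrC.
rewrite esumZl ?invr_ge0 ?wdeg_ge0 // -[X in (_ * X)%E]fineK //.
by rewrite -/(wdeg mu x) -EFinM mulVf.
Qed.

Lemma wprob_ge0 m x y : (0 <= wprob mu m x y)%E.
Proof.
elim: m x => [|m IH] x /=; first by case: ifP.
by apply: esum_ge0 => z _; rewrite mule_ge0 // lee_fin divr_ge0 ?wdeg_ge0.
Qed.

Lemma wprob_le1 m x y : (wprob mu m x y <= 1)%E.
Proof.
elim: m x => [|m IH] x /=; first by case: ifP.
apply: le_trans (esum_transition_le1 x); apply: le_esum => z _.
by rewrite -[X in (_ <= X)%E]mule1 lee_wpmul2l // lee_fin divr_ge0 ?wdeg_ge0.
Qed.

Lemma wprob_fin_num m x y : wprob mu m x y \is a fin_num.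
Proof. by rewrite ge0_fin_numE ?wprob_ge0 // (le_lt_trans (wprob_le1 m x y)) ?ltry. Qed.

Lemma pkernel_ge0 m x y : 0 <= pkernel mu m x y.
Proof. by rewrite /pkernel divr_ge0 ?wdeg_ge0 // fine_ge0 // wprob_ge0. Qed.

Lemma qkernel_ge0 m x y : 0 <= qkernel mu m x y.
Proof. by rewrite /qkernel divr_ge0 // addr_ge0 // pkernel_ge0. Qed.

Lemma wprob_set_near_qkernel (V A : set E) m x (c e G : R) :
  (forall y, V y -> 0 < wdeg mu y) -> gmeasure V mu A = G%:E -> 0 <= c -> 0 <= e ->
  (forall y, A y -> V y -> `|qkernel mu m x y - c| <= e) ->
  `|fine (wprob_set V mu m x A) + fine (wprob_set V mu m.+1 x A) - 2 * c * G|
    <= 2 * e * G.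
Proof.
move=> wdeg_pos AG c0 e0 qc.
pose f y := pkernel mu m x y + pkernel mu m.+1 x y.
have [S fS SG] : exists2 S, \esum_(y in A `&` V) (f y * wdeg mu y)%:E = S%:E &
    `|S - 2 * c * G| <= 2 * e * G.
  apply: esum_near_cst AG _ _ _ _ _; rewrite ?mulr_ge0 //.
  - by move=> y _; exact: wdeg_ge0.
  - by move=> y _; rewrite addr_ge0 ?pkernel_ge0.
  move=> y [Ay Vy]; have -> : f y = 2 * qkernel mu m x y.
    by rewrite /qkernel mulrC divfK ?pnatr_eq0.
  by rewrite -mulrBr normrM ger0_norm // ler_pM2l ?qc.
have pkernelE n y : V y -> (pkernel mu n x y * wdeg mu y)%:E = wprob mu n x y.
  by move=> Vy; rewrite /pkernel divfK ?gt_eqF ?wdeg_pos // fineK ?wprob_fin_num.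
have WS : (wprob_set V mu m x A + wprob_set V mu m.+1 x A)%E = S%:E.
  rewrite -fS /wprob_set -esumD => [|y _|y _]; try exact: wprob_ge0.
  by apply: eq_esum => y [_ Vy]; rewrite /f mulrDl EFinD !pkernelE.
have W_ge0 n : (0 <= wprob_set V mu n x A)%E by apply: esum_ge0 => y _; exact: wprob_ge0.
have W1fin : wprob_set V mu m x A \is a fin_num.
  by rewrite ge0_fin_numE // (le_lt_trans (leeDl _ (W_ge0 m.+1))) // WS ltry.
have W2fin : wprob_set V mu m.+1 x A \is a fin_num.
  by rewrite ge0_fin_numE // (le_lt_trans (leeDr _ (W_ge0 m))) // WS ltry.
by move: WS; rewrite -(fineK W1fin) -(fineK W2fin) -EFinD => -[->].
Qed.

End random_walk.

Section segment_compactness.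
Context {R : realType}.

Lemma bounded_above_segment (f : R -> R) (a b : R) : 0 < a ->
  (forall t, 0 < t -> forall e, 0 < e -> exists2 del, 0 < del &
     forall s, 0 < s -> `|s - t| < del -> `|f s - f t| < e) ->
  exists2 M, 0 <= M & forall t, a <= t <= b -> f t <= M.
Proof.
move=> a0 f_cont.
have cover := (near_covering_withinP _).2
  ((compact_near_coveringP _).1 (@segment_compact R a b)).
have /filter_ex[M fM] : \forall M \near +oo, `[a, b] `<=` (fun t => f t < M).
  apply: cover => t /=; rewrite in_itv /= => /andP[ta tb].
  have [del del0 fdel] := f_cont t (lt_le_trans a0 ta) 1 ltr01.
  near=> t' M => /=; rewrite in_itv /= => /andP[ta' _].
  have : `|f t' - f t| < 1.
    by apply: fdel; [exact: lt_le_trans ta' | rewrite distrC; near: t'; exists del].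
  have : f t + 1 < M by near: M; apply: nbhs_pinfty_gt; exact: num_real.
  by rewrite ltr_norml => ? /andP[_ ?]; lra.
exists (Num.max M 0); first by rewrite le_max lexx orbT.
by move=> t tI; rewrite le_max ltW ?fM //= in_itv.
Unshelve. all: by end_near.
Qed.

Lemma unif_cont_segment {T : Type} {dist : T -> T -> R} {f : R -> T -> R}
    {D : set T} {x : T} {a : R} (b : R) : dist x x = 0 -> D x -> 0 < a ->
  (forall t, 0 < t -> forall e, 0 < e -> exists2 del, 0 < del &
     forall s y, 0 < s -> D y -> `|s - t| < del -> dist x y < del -> `|f s y - f t x| < e) ->
  forall e, 0 < e -> exists2 del, 0 < del & forall t, a <= t <= b ->
    forall s y, 0 < s -> D y -> `|s - t| < del -> dist x y < del -> `|f s y - f t x| < e.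
Proof.
move=> dxx Dx a0 f_cont e e0.
have cover := (near_covering_withinP _).2
  ((compact_near_coveringP _).1 (@segment_compact R a b)).
pose P del t := forall s y, 0 < s -> D y ->
  `|s - t| < del -> dist x y < del -> `|f s y - f t x| < e.
have Pnear : \forall del \near 0^'+, `[a, b] `<=` P del.
  apply: cover => t /=; rewrite in_itv /= => /andP[ta _].
  have t0 : 0 < t by exact: lt_le_trans ta.
  have [d d0 fd] := f_cont t t0 (e / 2) (divr_gt0 e0 (ltr0Sn _ 1)).
  near=> t' del => /= _ s y s0 Dy st' xy.
  have fsy : `|f s y - f t x| < e / 2.
    apply: fd => //; last first.
      by apply: lt_trans xy _; near: del; exact: nbhs_right_lt.
    rewrite (le_lt_trans (ler_distD t' _ _)) // [d]splitr ltrD //.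
      by apply: lt_trans st' _; near: del; apply: nbhs_right_lt; exact: divr_gt0.
    by rewrite distrC; near: t'; exists (d / 2) => //; exact: divr_gt0.
  have ft'x : `|f t' x - f t x| < e / 2.
    by apply: fd; rewrite ?dxx //; near: t'; exact: lt_nbhsr t0.
  have -> : f s y - f t' x = (f s y - f t x) - (f t' x - f t x) by ring.
  by rewrite (le_lt_trans (ler_normB _ _)) // [e]splitr ltrD.
have /filter_ex[del [del0 Pdel]] : \forall del \near 0^'+, 0 < del /\ `[a, b] `<=` P del.
  by near=> del; split; near: del; [exact: nbhs_right_gt | exact: Pnear].
by exists del => // t tI; apply: Pdel; rewrite /= in_itv.
Unshelve. all: by end_near.
Qed.

End segment_compactness.

Section limits.
Context {R : realType}.

Lemma cvg_EFin_near {u : (\bar R)^nat} {l : R} :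
  u n @[n --> \oo] --> l%:E -> forall e, 0 < e ->
  \forall n \near \oo, exists2 y, u n = y%:E & `|l - y| < e.
Proof.
move=> /fine_cvgP[u_fin u_cvg] e e0; near=> n.
exists (fine (u n)); first by rewrite fineK //; near: n.
by near: n; exact: (cvgrPdist_lt _ _).1 u_cvg e e0.
Unshelve. all: by end_near.
Qed.

Lemma limn_esup_cvg0_near {u : R -> (\bar R)^nat} :
  limn_esup (u del) @[del --> 0^'+] --> 0%E ->
  forall eta, 0 < eta -> exists2 del, 0 < del &
    exists N, forall n, (N <= n)%N -> (u del n < eta%:E)%E.
Proof.
move=> /fine_cvgP[u_fin u_cvg] eta eta0.
have /filter_ex[del [del0 [ufin uclose]]] : \forall del \near 0^'+, 0 < del /\
    limn_esup (u del) \is a fin_num /\ `|0 - fine (limn_esup (u del))| < eta.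
  near=> del; split; first by near: del; exact: nbhs_right_gt.
  by split; near: del; [exact: u_fin | exact: (cvgrPdist_lt _ _).1 u_cvg _ eta0].
have : (limn_esup (u del) < eta%:E)%E.
  rewrite -(fineK ufin) lte_fin; move: uclose; rewrite sub0r normrN.
  exact: le_lt_trans (ler_norm _).
have -> : limn_esup (u del) = ereal_inf (range (esups (u del))).
  by rewrite limn_esup_lim; apply: cvg_lim; [exact: ereal_hausdorff | exact: cvg_esups_inf].
move=> /ereal_inf_lt[_ [N _ <-] supN]; exists del => //; exists N => n Nn.
by apply: le_lt_trans supN; apply: ereal_sup_ubound; exists n.
Unshelve. all: by end_near.
Qed.

Lemma cvge0_near_le (u : (\bar R)^nat) :
  (forall e, 0 < e -> \forall n \near \oo, (0 <= u n)%E /\ (u n <= e%:E)%E) ->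
  u n @[n --> \oo] --> 0%E.
Proof.
move=> u_small.
have ufin n e : (0 <= u n)%E -> (u n <= e%:E)%E -> u n \is a fin_num.
  by move=> u0 ue; rewrite ge0_fin_numE // (le_lt_trans ue) ?ltry.
apply/fine_cvgP; split.
  by have := u_small 1 ltr01; apply: filterS => n [u0 u1]; exact: ufin u0 u1.
apply/(cvgrPdist_le _ _).2 => e e0.
have := u_small e e0; apply: filterS => n [u0 ue].
by rewrite sub0r normrN ger0_norm ?fine_ge0 // -lee_fin fineK ?(ufin _ _ u0 ue).
Qed.

End limits.

Lemma nfloor_shift {R : realType} (g t : R) : 0 < g -> 0 <= t ->
  nfloor (g * (t + g^-1)) = (nfloor (g * t)).+1.
Proof.
move=> g0 t0; rewrite /nfloor mulrDr mulfV ?gt_eqF //.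
have /andP[tl tr] := truncn_itv (mulr_ge0 (ltW g0) t0).
by apply: truncn_def; rewrite -natr1 lerD2r tl -natr1 ltrD2r.
Qed.

(* Dividing [Q * G ~ Q0 * N] by [G ~ N]. *)
Lemma ratio_estimate {R : realFieldType} (Q Q0 M G N eta del : R) : 0 < N ->
  0 <= Q0 <= M -> `|G - N| <= N / 2 -> M * `|G - N| <= del * N ->
  `|Q * G - Q0 * N| <= eta * G + del * N -> `|Q - Q0| <= eta + 4 * del.
Proof.
move=> N0 /andP[Q00 Q0M] GN MGN QGN.
have G_ge : N / 2 <= G by move: GN; rewrite ler_distl => /andP[]; lra.
have G0 : 0 < G by apply: lt_le_trans G_ge; rewrite divr_gt0.
have del0 : 0 <= del.
  by have := mulr_ge0 (le_trans Q00 Q0M) (normr_ge0 (G - N)); nra.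
rewrite -(ler_pM2r G0) -[X in _ * X <= _]gtr0_norm // -normrM.
have -> : (Q - Q0) * G = (Q * G - Q0 * N) - Q0 * (G - N) by ring.
apply: le_trans (ler_normB _ _) _; rewrite normrM ger0_norm //.
have := ler_wpM2r (normr_ge0 (G - N)) Q0M; nra.
Qed.

Section local_limit.
Context {R : realType} {d0 : measure_display} {E : measurableType d0}
  {dE : E -> E -> R} {F : set E} {rho : E} {nu : {measure set E -> \bar R}}
  {q : R -> E -> R} {V : nat -> set E} {adj : nat -> E -> E -> Prop}
  {mu : nat -> E -> E -> R} {alpha beta gamma alphat : nat -> R} {g : nat -> E -> E}
  {a b : R}.

Hypothesis dE_metric : is_metric dE.
Hypothesis dE_borel : @measurable d0 E = <<s [set U | dopen dE U] >>.
Hypothesis F_compact : forall x r, 0 < r -> dcompact dE (F `&` dcball dE x r).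
Hypothesis nu_setIF : forall A, measurable A -> nu A = nu (A `&` F).
Hypothesis nu_locfin : forall x, F x -> exists2 r : R, 0 < r & (nu (dball dE x r) < +oo)%E.
Hypothesis nu_supp : forall x r, F x -> 0 < r -> (0 < nu (dball dE x r))%E.
Hypothesis q_cont : forall t x, 0 < t -> F x -> forall e : R, 0 < e ->
  exists2 del : R, 0 < del & forall s y, 0 < s -> F y -> `|s - t| < del ->
    dE x y < del -> `|q s y - q t x| < e.
Hypothesis q_ge0 : forall t x, 0 < t -> F x -> 0 <= q t x.
Hypothesis graphs : forall n, (0 < n)%N -> is_lf_connected_graph (V n) (adj n) /\ V n rho.
Hypothesis weights : forall n, (0 < n)%N -> forall x y,
  0 <= mu n x y /\ mu n x y = mu n y x /\ (0 < mu n x y <-> adj n x y).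
Hypothesis alpha_cvg : alpha n @[n --> \oo] --> +oo.
Hypothesis beta_cvg : beta n @[n --> \oo] --> +oo.
Hypothesis gamma_cvg : gamma n @[n --> \oo] --> +oo.
Hypothesis g_closest : forall n, (0 < n)%N -> forall x,
  V n (g n x) /\ forall v, V n v -> dE x (g n x) <= dE x v.
Hypothesis a_gt0 : 0 < a.
Hypothesis a_le_b : a <= b.
Hypothesis alphat_o : alphat =o_\oo alpha.
Hypothesis A1a2 : forall r, 0 < r -> exists c2 : R, exists n0 : nat,
  forall n, (n0 <= n)%N -> (0 < n)%N -> forall x y,
    V n x -> V n y -> dball dE rho r x -> dball dE rho r y ->
    gdist (adj n) x y <= c2 * alpha n * dE x y + alphat n.
Hypothesis A1b : forall r, 0 < r ->
  ereal_sup [set (dist_set dE x (V n))%:E | x in F `&` dball dE rho r]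
    @[n --> \oo] --> 0%E.
Hypothesis A1c : forall x r, F x -> 0 < r ->
  ((beta n)^-1%:E * gmeasure (V n) (mu n) (dball dE x r))%E
    @[n --> \oo] --> nu (dball dE x r).
Hypothesis A1d : forall a' b', 0 < a' -> a' <= b' -> forall x r, F x -> 0 < r ->
  forall e : R, 0 < e -> \forall n \near \oo, forall t, a' <= t <= b' ->
    `|fine (wprob_set (V n) (mu n) (nfloor (gamma n * t)) rho (dball dE x r))
      - fine (\int[nu]_(y in F `&` dball dE x r) (q t y)%:E)| < e.
Hypothesis A2 : forall a' b', 0 < a' -> a' <= b' -> forall r, 0 < r ->
  limn_esup (fun n => ereal_sup
    [set z | exists x y t, gball (V n) (adj n) rho (alpha n * r) x /\
              gball (V n) (adj n) rho (alpha n * r) y /\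
              gdist (adj n) x y <= alpha n * del /\ a' <= t <= b' /\
              z = (beta n * `|qkernel (mu n) (nfloor (gamma n * t)) rho x
                             - qkernel (mu n) (nfloor (gamma n * t)) rho y|)%:E])
    @[del --> 0^'+] --> 0%E.

Let dE_ge0 x y : 0 <= dE x y. Proof. by case: dE_metric. Qed.
Let dEii x : dE x x = 0. Proof. by case: dE_metric => _ [/(_ x x) [_ ->]]. Qed.
Let dE_sym x y : dE x y = dE y x. Proof. by case: dE_metric => _ [_ []]. Qed.
Let dE_tri x y z : dE x z <= dE x y + dE y z. Proof. by case: dE_metric => _ [_ []]. Qed.

Lemma gdist_le_near r : 0 < r -> exists2 C, 0 <= C & forall k, 0 < k ->
  \forall n \near \oo, forall u v, V n u -> V n v -> dE rho u < r -> dE rho v < r ->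
    gdist (adj n) u v <= alpha n * (C * dE u v + k).
Proof.
move=> r0; have [c [n0 cP]] := A1a2 _ r0.
exists `|c| => // k k0; near=> n => u v Vu Vv ru rv.
have alpha0 : 0 < alpha n by near: n; exact: (cvgryPgt _).1 alpha_cvg 0.
have alphat_le : `|alphat n| <= k * `|alpha n|.
  by near: n; exact: (eqoP _ _ _).1 alphat_o k k0.
have n0n : (n0 <= n)%N by near: n; exact: nbhs_infty_ge.
have n_gt0 : (0 < n)%N by near: n; exact: nbhs_infty_gt.
apply: le_trans (cP n n0n n_gt0 u v Vu Vv ru rv) _.
have : c * alpha n * dE u v <= `|c| * alpha n * dE u v.
  by rewrite -!mulrA ler_wpM2r // ?ler_norm // mulr_ge0 ?dE_ge0 ?ltW.
have := ler_norm (alphat n); rewrite (gtr0_norm alpha0) in alphat_le; nra.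
Unshelve. all: by end_near.
Qed.

Section at_point.
Context {x : E}.
Hypothesis Fx : F x.

Lemma vertex_near r : 0 < r -> \forall n \near \oo, dE x (g n x) < r.
Proof.
move=> r0; have R0_gt0 : 0 < dE rho x + 1 by rewrite ltr_wpDl.
apply: filterS2 (nbhs_infty_gt 0) (cvg_EFin_near (A1b _ R0_gt0) _ r0) => n n0 [s sup_s s_r].
have [Vg g_min] := g_closest _ n0 x.
have : dist_set dE x (V n) <= s.
  by rewrite -lee_fin -sup_s; apply: ereal_sup_ubound; exists x => //; split => //; rewrite /dball /= ltrDl.
have : dE x (g n x) <= dist_set dE x (V n).
  by apply: lb_le_inf; [exists (dE x (g n x)); exists (g n x) | move=> _ [v Vv <-]; exact: g_min].
by move: s_r; rewrite sub0r normrN => /(le_lt_trans (ler_norm _)); lra.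
Qed.

Lemma qkernel_flat eta : 0 < eta -> exists2 r, 0 < r & \forall n \near \oo,
  forall t y, a <= t <= b -> V n y -> dE x y < r ->
  beta n * `|qkernel (mu n) (nfloor (gamma n * t)) rho y
             - qkernel (mu n) (nfloor (gamma n * t)) rho (g n x)| <= eta.
Proof.
move=> eta0; pose R0 := dE rho x + 1; have R00 : 0 < R0 by rewrite /R0 ltr_wpDl.
have [C C0 gdistP] := gdist_le_near _ R00.
pose R1 := C * R0 + 2; have R10 : 0 < R1 by rewrite /R1; have := mulr_ge0 C0 (ltW R00); lra.
have [del del0 [N supP]] := limn_esup_cvg0_near (A2 _ _ a_gt0 a_le_b _ R10) _ eta0.
(* Vertices within [r] of [x] lie in the graph ball of radius [alpha n * R1]
   around [rho], and are at graph distance at most [alpha n * del] from each other. *)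
pose r := Num.min (del / (4 * (C + 1))) (1 / 2).
have C1 : 0 < C + 1 by rewrite ltr_wpDl.
have r0 : 0 < r by rewrite /r lt_min !divr_gt0 ?mulr_gt0.
have r_half : r <= 1 / 2 by rewrite ge_min lexx orbT.
have Cr : 4 * C * r <= del.
  have : r * (4 * (C + 1)) <= del by rewrite -ler_pdivlMr ?mulr_gt0 // ge_min lexx.
  by have := ltW r0; nra.
pose k := Num.min (del / 2) 1.
have k0 : 0 < k by rewrite /k lt_min ltr01 andbT divr_gt0.
have k_del : k <= del / 2 by rewrite ge_min lexx.
have k1 : k <= 1 by rewrite ge_min lexx orbT.
exists r => //; near=> n => t y tI Vy xy.
have n_gt0 : (0 < n)%N by near: n; exact: nbhs_infty_gt.
have [[_ Vrho] [Vg _]] := (graphs _ n_gt0, g_closest _ n_gt0 x).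
have alpha0 : 0 < alpha n by near: n; exact: (cvgryPgt _).1 alpha_cvg 0.
have gx_r : dE x (g n x) < r by near: n; exact: vertex_near.
have gd : forall u v, V n u -> V n v -> dE rho u < R0 -> dE rho v < R0 ->
    gdist (adj n) u v <= alpha n * (C * dE u v + k) by near: n; exact: gdistP.
have near_rho v : dE x v < r -> dE rho v < R0.
  by move=> xv; have := dE_tri rho x v; rewrite /R0; lra.
have in_gball v : V n v -> dE x v < r -> gball (V n) (adj n) rho (alpha n * R1) v.
  move=> Vv xv; split => //; apply: le_lt_trans (gd rho v Vrho Vv _ _) _.
  - by rewrite dEii.
  - exact: near_rho.
  rewrite ltr_pM2l // /R1; have := near_rho v xv.
  by have := dE_ge0 rho v; nra.
have gdist_gy : gdist (adj n) (g n x) y <= alpha n * del.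
  apply: le_trans (gd _ _ Vg Vy (near_rho _ gx_r) (near_rho _ xy)) _.
  have : dE (g n x) y <= 2 * r.
    by have := dE_tri (g n x) x y; rewrite [dE _ x]dE_sym; lra.
  by move=> le2r; rewrite ler_pM2l //; have := ler_wpM2l C0 le2r; nra.
have Nn : (N <= n)%N by near: n; exact: nbhs_infty_ge.
rewrite distrC -lee_fin; apply/ltW/(le_lt_trans _ (supP n Nn)).
apply: ereal_sup_ubound; exists (g n x), y, t.
by do 2 (split; first exact: in_gball).
Unshelve. all: by end_near.
Qed.

Lemma integral_q_near ep : 0 < ep -> exists2 del, 0 < del & forall r N t s,
  0 < r <= del -> nu (dball dE x r) = N%:E -> a <= t <= b -> 0 < s -> `|s - t| < del ->
  `|fine (\int[nu]_(y in F `&` dball dE x r) (q s y)%:E) - q t x * N| <= ep * N.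
Proof.
move=> ep0; have [del del0 qP] :=
  unif_cont_segment b (dEii x) Fx a_gt0 (fun t t0 => q_cont t x t0 Fx) _ ep0.
exists del => // r N t s /andP[r0 rdel] nuB tI s0 st.
have t0 : 0 < t by case/andP: tI => + _; exact: lt_le_trans.
have mFB := measurable_setI_dball dE_metric dE_borel F_compact x r r0.
apply: integral_near_cst => //.
- by rewrite setIC -nu_setIF //; exact: measurable_dball dE_metric dE_borel x r.
- exact: q_ge0.
- exact: ltW.
- by move=> y [Fy _]; exact: q_ge0.
- by move=> y [Fy xy]; apply/ltW/(qP t tI s y s0 Fy st)/(lt_le_trans xy).
Qed.

Lemma walk_mass_near ep : 0 < ep -> exists2 del, 0 < del & forall r N,
  0 < r <= del -> nu (dball dE x r) = N%:E -> 0 < N ->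
  \forall n \near \oo, forall t, a <= t <= b ->
    `|fine (wprob_set (V n) (mu n) (nfloor (gamma n * t)) rho (dball dE x r))
      + fine (wprob_set (V n) (mu n) (nfloor (gamma n * t)).+1 rho (dball dE x r))
      - 2 * q t x * N| <= ep * N.
Proof.
move=> ep0; have ep4 : 0 < ep / 4 by rewrite divr_gt0.
have [del del0 intP] := integral_q_near _ ep4.
exists del => // r N rdel nuB N0; have r0 : 0 < r by case/andP: rdel.
have ab1 : a <= b + 1 by apply: le_trans a_le_b _; rewrite lerDl.
have walkP := A1d _ _ a_gt0 ab1 _ _ Fx r0 _ (mulr_gt0 ep4 N0).
apply: filterS2 walkP ((cvgryPgt _).1 gamma_cvg (1 + del^-1)) => n W gamma_big t tI.
have [ta tb] := andP tI; have t0 : 0 < t by exact: lt_le_trans ta.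
have gamma0 : 0 < gamma n by apply: lt_trans gamma_big; rewrite ltr_wpDr ?invr_ge0 ?ltW.
have ginv0 : 0 < (gamma n)^-1 by rewrite invr_gt0.
have ginv_del : (gamma n)^-1 < del.
  rewrite -[X in _ < X]invrK ltf_pV2 ?posrE ?invr_gt0 //.
  by apply: le_lt_trans gamma_big; rewrite lerDr.
have ginv1 : (gamma n)^-1 < 1.
  by rewrite invf_lt1 //; apply: le_lt_trans gamma_big; rewrite lerDl invr_ge0 ltW.
(* The walk at time [m.+1] is compared with [q] at time [t + (gamma n)^-1]. *)
rewrite -(nfloor_shift _ _ gamma0 (ltW t0)).
have W1 := W t (ltac:(lra) : a <= t <= b + 1).
have W2 := W (t + (gamma n)^-1) (ltac:(lra) : a <= t + (gamma n)^-1 <= b + 1).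
have I1 := intP r N t t rdel nuB tI t0 ltac:(by rewrite subrr normr0).
have I2 := intP r N t (t + (gamma n)^-1) rdel nuB tI (addr_gt0 t0 ginv0)
  ltac:(by rewrite addrAC subrr add0r gtr0_norm).
move: W1 W2 I1 I2; rewrite !ltr_norml !ler_norml => /andP[? ?] /andP[? ?] /andP[? ?] /andP[? ?].
by apply/andP; split; lra.
Qed.

Lemma graph_mass_near eta : 0 < eta -> exists2 del, 0 < del & forall r, 0 < r <= del ->
  \forall n \near \oo, forall t G, a <= t <= b ->
    ((beta n)^-1%:E * gmeasure (V n) (mu n) (dball dE x r))%E = G%:E ->
    `|fine (wprob_set (V n) (mu n) (nfloor (gamma n * t)) rho (dball dE x r))
      + fine (wprob_set (V n) (mu n) (nfloor (gamma n * t)).+1 rho (dball dE x r))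
      - 2 * (beta n * qkernel (mu n) (nfloor (gamma n * t)) rho (g n x)) * G|
    <= 2 * eta * G.
Proof.
move=> eta0; have [del del0 flatP] := qkernel_flat _ eta0.
exists del => // r /andP[r0 rdel].
have pos : \forall n \near \oo, (0 < n)%N /\ 0 < beta n.
  by near=> n; split; near: n; [exact: nbhs_infty_gt | exact: (cvgryPgt _).1 beta_cvg 0].
apply: filterS2 flatP pos => n flat [n_gt0 beta0] t G tI G_def.
have gmeas : gmeasure (V n) (mu n) (dball dE x r) = (beta n * G)%:E.
  by rewrite EFinM -G_def muleA -EFinM mulfV ?gt_eqF // mul1e.
have [[Gn _] mu_n] := (graphs _ n_gt0, weights _ n_gt0).
have mu0 y z : 0 <= mu n y z by case: (mu_n y z).
have mu_adj y z : 0 < mu n y z <-> adj n y z by case: (mu_n y z) => _ [].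
rewrite (_ : 2 * (_ * _) * G = 2 * qkernel (mu n) (nfloor (gamma n * t)) rho (g n x)
  * (beta n * G)); last by ring.
rewrite (_ : 2 * eta * G = 2 * (eta / beta n) * (beta n * G)); last by field; rewrite gt_eqF.
apply: (wprob_set_near_qkernel mu0).
- exact: (wdeg_gt0 mu0 Gn mu_adj).
- exact: gmeas.
- exact: qkernel_ge0.
- by rewrite divr_ge0 ?ltW.
move=> y xy Vy; rewrite ler_pdivlMr // mulrC.
by apply: flat tI Vy (lt_le_trans xy rdel).
Unshelve. all: by end_near.
Qed.

Lemma nu_dball_fin_gt0 r0 r : (nu (dball dE x r0) < +oo)%E -> 0 < r <= r0 ->
  exists2 N, nu (dball dE x r) = N%:E & 0 < N.
Proof.
move=> nu_fin /andP[r_gt0 rr0].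
have nuB_fin : (nu (dball dE x r) < +oo)%E.
  apply: le_lt_trans nu_fin; apply: le_measure; rewrite ?inE.
  - exact: (measurable_dball dE_metric dE_borel).
  - exact: (measurable_dball dE_metric dE_borel).
  by move=> y; rewrite /dball /=; lra.
exists (fine (nu (dball dE x r))); first by rewrite fineK ?ge0_fin_numE.
by rewrite -lte_fin fineK ?ge0_fin_numE ?nu_supp.
Qed.

Lemma eventually_close eps : 0 < eps -> \forall n \near \oo, forall t, a <= t <= b ->
  `|beta n * qkernel (mu n) (nfloor (gamma n * t)) rho (g n x) - q t x| <= eps.
Proof.
move=> eps0; have [M M0 qM] : exists2 M, 0 <= M & forall t, a <= t <= b -> q t x <= M.
  apply: (bounded_above_segment _ _ b a_gt0) => t t0 e e0.
  have [del del0 qP] := q_cont t x t0 Fx e e0.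
  by exists del => // s s0 st; apply: qP; rewrite ?dEii.
have [r1 r10 graphP] := graph_mass_near _ (divr_gt0 eps0 (ltr0Sn _ 1)).
have [r2 r20 walkP] := walk_mass_near _ (divr_gt0 eps0 (ltr0Sn _ 3)).
have [r0 r00 nu_fin] := nu_locfin _ Fx.
pose r := Num.min r0 (Num.min r1 r2).
have r_gt0 : 0 < r by rewrite !lt_min r00 r10 r20.
have [rr0 rr1 rr2] : [/\ 0 < r <= r0, 0 < r <= r1 & 0 < r <= r2].
  by rewrite r_gt0 !ge_min !lexx !orbT.
have [N nuB N0] := nu_dball_fin_gt0 _ _ nu_fin rr0.
pose tau := Num.min (N / 2) (eps / 8 * N / (M + 1)).
have tau0 : 0 < tau by rewrite lt_min !divr_gt0 ?mulr_gt0 ?ltr_wpDl.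
have [tauN MtauN] : tau <= N / 2 /\ M * tau <= eps / 8 * N.
  split; first by rewrite ge_min lexx.
  have : tau <= eps / 8 * N / (M + 1) by rewrite ge_min lexx orbT.
  by rewrite ler_pdivlMr ?ltr_wpDl //; have := ltW tau0; nra.
have := A1c _ _ Fx r_gt0; rewrite nuB => /cvg_EFin_near/(_ _ tau0) massP.
move: (walkP r N rr2 nuB N0) massP; apply: filter_app2.
apply: filterS (graphP r rr1) => n graph_n walk_n [G G_def GN] t tI.
have [qt0 qtM] : 0 <= q t x /\ q t x <= M.
  by split; [apply: q_ge0 Fx; case/andP: tI => + _; exact: lt_le_trans | exact: qM].
rewrite [eps](_ : _ = eps / 2 + 4 * (eps / 8)); last by field.
apply: (ratio_estimate _ _ M G _ _ _ N0); first by rewrite qt0 qtM.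
- by rewrite distrC; exact: le_trans (ltW GN) tauN.
- by apply: le_trans MtauN; rewrite distrC ler_wpM2l // ltW.
have := graph_n t G tI G_def; have := walk_n t tI.
rewrite !ler_norml => /andP[? ?] /andP[? ?]; apply/andP; split; lra.
Qed.

End at_point.
End local_limit.

Theorem proposition2p2
  (R : realType) (d0 : measure_display) (E : measurableType d0)
  (dE : E -> E -> R) (F : set E) (rho : E)
  (nu : {measure set E -> \bar R}) (q : R -> E -> R)
  (V : nat -> set E) (adj : nat -> E -> E -> Prop) (mu : nat -> E -> E -> R)
  (alpha beta gamma alphat : nat -> R) (g : nat -> E -> E) (a b : R)
  (hdE : is_metric dE)
  (hborel : @measurable d0 E = <<s [set U | dopen dE U] >>)
  (hFcpt : forall x r, 0 < r -> dcompact dE (F `&` dcball dE x r))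
  (hrho : F rho)
  (hnuF : forall A, measurable A -> nu A = nu (A `&` F))
  (hnu_lf : forall x, F x -> exists2 r : R, 0 < r & (nu (dball dE x r) < +oo)%E)
  (hnu_reg : forall A, measurable A -> A `<=` F ->
     nu A = ereal_sup [set nu K | K in [set K | measurable K /\ K `<=` A /\ dcompact dE K]])
  (hnu_supp : forall x r, F x -> 0 < r -> (0 < nu (dball dE x r))%E)
  (hq_cont : forall t x, 0 < t -> F x -> forall e : R, 0 < e ->
     exists2 del : R, 0 < del & forall s y, 0 < s -> F y -> `|s - t| < del ->
       dE x y < del -> `|q s y - q t x| < e)
  (hq_nonneg : forall t x, 0 < t -> F x -> 0 <= q t x)
  (hq_int : forall t, 0 < t -> (\int[nu]_(x in F) (q t x)%:E = 1)%E)
  (hG : forall n, (0 < n)%N -> is_lf_connected_graph (V n) (adj n) /\ V n rho)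
  (hmu : forall n, (0 < n)%N -> forall x y,
     0 <= mu n x y /\ mu n x y = mu n y x /\ (0 < mu n x y <-> adj n x y))
  (hseq : forall n, (0 < n)%N -> 0 <= alpha n /\ 0 <= beta n /\ 0 <= gamma n)
  (halpha : alpha n @[n --> \oo] --> +oo)
  (hbeta : beta n @[n --> \oo] --> +oo)
  (hgamma : gamma n @[n --> \oo] --> +oo)
  (hg : forall n, (0 < n)%N -> forall x,
     V n (g n x) /\ forall v, V n v -> dE x (g n x) <= dE x v)
  (* the compact interval I = [a, b] in (0, oo) *)
  (ha : 0 < a) (hab : a <= b)
  (* Assumption (A1)(a) *)
  (hA1a1 : exists2 c1 : R, 0 < c1 & forall n, (0 < n)%N -> forall x y,
     V n x -> V n y -> c1 * alpha n * dE x y <= gdist (adj n) x y)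
  (halphat_nonneg : forall n, (0 < n)%N -> 0 <= alphat n)
  (halphat : alphat =o_\oo alpha)
  (hA1a2 : forall r, 0 < r -> exists c2 : R, exists n0 : nat,
     forall n, (n0 <= n)%N -> (0 < n)%N -> forall x y,
       V n x -> V n y -> dball dE rho r x -> dball dE rho r y ->
       gdist (adj n) x y <= c2 * alpha n * dE x y + alphat n)
  (* Assumption (A1)(b) *)
  (hA1b : forall r, 0 < r ->
     ereal_sup [set (dist_set dE x (V n))%:E | x in F `&` dball dE rho r]
       @[n --> \oo] --> 0%E)
  (* Assumption (A1)(c) *)
  (hA1c : forall x r, F x -> 0 < r ->
     ((beta n)^-1%:E * gmeasure (V n) (mu n) (dball dE x r))%E
       @[n --> \oo] --> nu (dball dE x r))
  (* Assumption (A1)(d) *)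
  (hA1d : forall a' b', 0 < a' -> a' <= b' -> forall x r, F x -> 0 < r ->
     forall e : R, 0 < e -> \forall n \near \oo, forall t, a' <= t <= b' ->
       `|fine (wprob_set (V n) (mu n) (nfloor (gamma n * t)) rho (dball dE x r))
         - fine (\int[nu]_(y in F `&` dball dE x r) (q t y)%:E)| < e)
  (* Assumption (A2) *)
  (hA2 : forall a' b', 0 < a' -> a' <= b' -> forall r, 0 < r ->
     limn_esup (fun n => ereal_sup
       [set z | exists x y t, gball (V n) (adj n) rho (alpha n * r) x /\
                 gball (V n) (adj n) rho (alpha n * r) y /\
                 gdist (adj n) x y <= alpha n * del /\ a' <= t <= b' /\
                 z = (beta n * `|qkernel (mu n) (nfloor (gamma n * t)) rho x
                                - qkernel (mu n) (nfloor (gamma n * t)) rho y|)%:E])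
       @[del --> 0^'+] --> 0%E) :
  forall x, F x ->
    ereal_sup [set (`|beta n * qkernel (mu n) (nfloor (gamma n * t)) rho (g n x)
                       - q t x|)%:E | t in [set t | a <= t <= b]]
      @[n --> \oo] --> 0%E.
Proof.
move=> x Fx; apply: cvge0_near_le => eps eps0.
have close := eventually_close hdE hborel hFcpt hnuF hnu_lf hnu_supp hq_cont hq_nonneg
  hG hmu halpha hbeta hgamma hg ha hab halphat hA1a2 hA1b hA1c hA1d hA2 Fx _ eps0.
apply: filterS close => n close_n; split.
- apply: le_trans (ereal_sup_ubound _); last by exists a; rewrite //= lexx hab.
  by rewrite lee_fin.
- by apply: ge_ereal_sup => _ [t tI <-]; rewrite lee_fin; exact: close_n.
Qed.
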